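(* Let $p=(p_1,\dots,p_n)\in[0,1]^n$ and $y=y_1\cdots y_m\in\{0,1\}^m$ with $n\ge m>0$, and let $i\in\{1,\dots,n\}$. Then $$\mathbf F(p,y)=\mathbf F(p_{[n]\setminus\{i\}},y)+p_i\sum_{k:\,y_k=1}\mathbf F(p_{[1:i-1]},y_{[1:k-1]})\,\mathbf F(p_{[i+1:n]},y_{[k+1:m]})+(1-p_i)\sum_{k:\,y_k=0}\mathbf F(p_{[1:i-1]},y_{[1:k-1]})\,\mathbf F(p_{[i+1:n]},y_{[k+1:m]}).$$
   Context: For integers $a,b$, $[a:b]=\{a,a+1,\dots,b\}$ if $b\ge a$ and $\emptyset$ otherwise; $[a]=[1:a]$. For a vector $p$ and index set $T$, $p_T$ is the subvector of $p$ with coordinates in $T$ (in increasing order), and similarly $y_T$ for sequences; $y_{[1:0]}$ and $y_{[m+1:m]}$ are the empty sequence. The relaxed binomial coefficient $\mathbf F:[0,1]^n\times\{0,1\}^m\to\mathbb R$ is defined by: if $1\le m\le n$, $\mathbf F(p,v)=\sum_{S\subseteq[n],|S|=m}\prod_{j=1}^m p_{S_j}^{v_j}(1-p_{S_j})^{1-v_j}$, where $S_1<\dots<S_m$ are the elements of $S$; if $m=0\le n$ (including $n=0$), $\mathbf F(p,v)=1$; otherwise ($m>n$) $\mathbf F(p,v)=0$. Equivalently $\mathbf F(p,v)$ is the expected number of occurrences of $v$ as a subsequence of a random $Z\in\{0,1\}^n$ with independent $Z_i\sim\mathrm{Bernoulli}(p_i)$. *)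

From mathcomp Require Import all_boot all_order all_algebra.
Set Implicit Arguments. Unset Strict Implicit. Unset Printing Implicit Defensive.
Import Order.TTheory GRing.Theory Num.Theory.
Local Open Scope ring_scope.

(* Vectors p in [0,1]^n are sequences of length n; words v in {0,1}^m are
   boolean sequences of length m.  Coordinates are 0-based in the seq
   (nth), i.e. p_j (1-based) = nth 0 p (j-1). *)

Definition bterm (R : pzRingType) (x : R) (v : bool) : R :=
  x ^+ (nat_of_bool v) * (1 - x) ^+ (1 - nat_of_bool v).

(* The relaxed binomial coefficient F(p,v).  For S : {set 'I_n}, enum S lists
   the elements of S in increasing order S_1 < ... < S_m. *)
Definition relaxed_binom (R : pzRingType) (p : seq R) (v : seq bool) : R :=
  let n := size p in
  let m := size v in
  if m == 0%N then 1
  else if (m <= n)%N then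
    \sum_(S : {set 'I_n} | #|S| == m)
      \prod_(j < m) bterm (nth 0 p (nth 0%N [seq val k | k <- enum S] j)) (nth false v j)
  else 0.

From mathcomp Require Import all_boot all_order all_algebra.
Import Order.TTheory GRing.Theory Num.Theory.

(* Splitting the sum defining F(x :: p, b :: v) according to whether the first
   coordinate is selected gives the recursion
     F(x :: p, b :: v) = F(p, b :: v) + x^b (1-x)^(1-b) F(p, v).
   Induction on the prefix p_[1:i-1] then shows that inserting a coordinate x
   into p splits F according to the letter y_k, if any, read at x. *)

Definition positions {n} (S : {set 'I_n}) : seq nat := [seq val k | k <- enum S].

Lemma size_positions n (S : {set 'I_n}) : size (positions S) = #|S|.
Proof. by rewrite size_map cardE. Qed.

Definition cons_set {n} (b : bool) (T : {set 'I_n}) : {set 'I_n.+1} :=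
  [set k | if unlift ord0 k is Some j then j \in T else b].

Lemma cons_set_bij n : bijective (fun bT : bool * {set 'I_n} => cons_set bT.1 bT.2).
Proof.
exists (fun S : {set 'I_n.+1} => (ord0 \in S, [set j : 'I_n | lift ord0 j \in S])).
  case=> b T; rewrite /cons_set !inE unlift_none; congr pair.
  by apply/setP => j; rewrite !inE liftK.
move=> S; apply/setP => k; rewrite inE.
by case: unliftP => [j|] ->; rewrite ?inE.
Qed.

Lemma positions_cons_set n b (T : {set 'I_n}) :
  positions (cons_set b T) =
    if b then 0%N :: map succn (positions T) else map succn (positions T).
Proof.
rewrite /positions /enum_mem -!enumT enum_ordSl /= inE unlift_none filter_map.
under eq_filter => j do rewrite /= inE liftK.
by case: b; rewrite /= -!map_comp.
Qed.

Lemma card_cons_set n b (T : {set 'I_n}) : #|cons_set b T| = (b + #|T|)%N.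
Proof.
by rewrite -!size_positions positions_cons_set; case: b; rewrite /= size_map.
Qed.

Local Open Scope ring_scope.

Lemma big_cons_set (V : nmodType) n (P : pred {set 'I_n.+1}) (F : {set 'I_n.+1} -> V) :
  \sum_(S | P S) F S =
    \sum_(T | P (cons_set false T)) F (cons_set false T)
    + \sum_(T | P (cons_set true T)) F (cons_set true T).
Proof.
rewrite (reindex _ (onW_bij _ (cons_set_bij n))) big_mkcond.
rewrite -(pair_bigA _ (fun b T => if P (cons_set b T) then F (cons_set b T) else 0)).
by rewrite big_bool addrC !(big_mkcond (fun T => P (cons_set _ T))).
Qed.

Section RelaxedBinom.
Context {R : pzRingType}.
Implicit Types (x : R) (p : seq R) (s : seq nat) (b : bool) (v y : seq bool).

Lemma bterm1 x : bterm x true = x.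
Proof. by rewrite /bterm expr1 expr0 mulr1. Qed.

Lemma bterm0 x : bterm x false = 1 - x.
Proof. by rewrite /bterm expr0 expr1 mul1r. Qed.

(* Pairing positions with letters by zip makes shifting the positions
   (weight_succ) free of any size condition. *)
Definition weight p s v : R := \prod_(jb <- zip s v) bterm (nth 0 p jb.1) jb.2.

Lemma weight_nil p s : weight p s [::] = 1.
Proof. by case: s => [|j s]; rewrite /weight big_nil. Qed.

Lemma weight_cons0 x p s b v :
  weight (x :: p) (0%N :: s) (b :: v) = bterm x b * weight (x :: p) s v.
Proof. by rewrite /weight /= big_cons. Qed.

Lemma weight_succ x p s v : weight (x :: p) (map succn s) v = weight p s v.
Proof.
elim: s v => [|j s IH] [|b v]; rewrite /weight /= ?big_nil //.
by rewrite !big_cons -!/(weight _ _ _) IH.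
Qed.

Lemma weight_nth p s v : size s = size v ->
  weight p s v = \prod_(j < size v) bterm (nth 0 p (nth 0%N s j)) (nth false v j).
Proof.
elim: s v => [|j s IH] [|b v] //= => [_|[sv]]; first by rewrite big_ord0 weight_nil.
by rewrite /weight /= big_cons -/(weight _ _ _) big_ord_recl IH.
Qed.

(* The case split in relaxed_binom is redundant: the bare sum is 1 for the
   empty word (only set0 is counted) and 0 when m > n (no set is counted). *)
Definition relaxed_binom_sum p v : R :=
  \sum_(S : {set 'I_(size p)} | #|S| == size v) weight p (positions S) v.

Lemma relaxed_binomE p v : relaxed_binom p v = relaxed_binom_sum p v.
Proof.
rewrite /relaxed_binom /relaxed_binom_sum; case: eqP => [/size0nil-> | _].
  by rewrite (big_pred1 set0) ?weight_nil // => S; rewrite /= cards_eq0.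
case: leqP => [vp | pv].
  by apply: eq_bigr => S /eqP cardS; rewrite weight_nth // size_positions.
rewrite big_pred0 // => S; apply: contraTF pv => /eqP <-.
by rewrite -leqNgt -[X in (_ <= X)%N]card_ord max_card.
Qed.

Lemma relaxed_binom0 p : relaxed_binom p [::] = 1.
Proof. by []. Qed.

Lemma relaxed_binom_nil b v : relaxed_binom ([::] : seq R) (b :: v) = 0.
Proof. by []. Qed.

Lemma relaxed_binom_cons x p b v :
  relaxed_binom (x :: p) (b :: v) =
    relaxed_binom p (b :: v) + bterm x b * relaxed_binom p v.
Proof.
rewrite !relaxed_binomE /relaxed_binom_sum big_cons_set big_distrr /=.
congr (_ + _); apply: eq_big => T; rewrite ?card_cons_set ?positions_cons_set //.
  by rewrite weight_succ.
by rewrite weight_cons0 weight_succ.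
Qed.

Lemma sum_relaxed_binom_cons_take x p b v (G : nat -> R) :
  \sum_(0%N <= k < (size v).+1) relaxed_binom (x :: p) (take k (b :: v)) * G k =
    \sum_(0%N <= k < (size v).+1) relaxed_binom p (take k (b :: v)) * G k
    + bterm x b * \sum_(0%N <= k < size v) relaxed_binom p (take k v) * G k.+1.
Proof.
rewrite !big_nat_recl // take0 !relaxed_binom0 -addrA; congr (_ + _).
rewrite big_distrr -big_split; apply: eq_bigr => k _ /=.
by rewrite relaxed_binom_cons mulrDl mulrA.
Qed.

Lemma relaxed_binom_cat_cons p1 x p2 y :
  relaxed_binom (p1 ++ x :: p2) y =
    relaxed_binom (p1 ++ p2) y +
    \sum_(0%N <= k < size y)
       relaxed_binom p1 (take k y) * (bterm x (nth false y k) * relaxed_binom p2 (drop k.+1 y)).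
Proof.
elim: p1 y => [|a p1 IH] [|b v]; try by rewrite big_geq // addr0.
  rewrite !cat0s relaxed_binom_cons big_nat_recl // relaxed_binom0 mul1r.
  by rewrite drop1 big1 ?addr0 // => k _; rewrite relaxed_binom_nil mul0r.
rewrite !cat_cons !relaxed_binom_cons !IH sum_relaxed_binom_cons_take.
by rewrite mulrDr addrACA.
Qed.

End RelaxedBinom.

Theorem lemma1 (R : realFieldType) (p : seq R) (y : seq bool) (i : nat) :
  (forall j, (j < size p)%N -> 0 <= nth 0 p j <= 1) ->
  (0 < size y)%N -> (size y <= size p)%N ->
  (1 <= i <= size p)%N ->
  relaxed_binom p y =
    relaxed_binom (take i.-1 p ++ drop i p) y
    + nth 0 p i.-1 *
        \sum_(1 <= k < (size y).+1 | nth false y k.-1)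
           relaxed_binom (take i.-1 p) (take k.-1 y)
           * relaxed_binom (drop i p) (drop k y)
    + (1 - nth 0 p i.-1) *
        \sum_(1 <= k < (size y).+1 | ~~ nth false y k.-1)
           relaxed_binom (take i.-1 p) (take k.-1 y)
           * relaxed_binom (drop i p) (drop k y).
Proof.
move=> _ _ _ /andP[i_gt0 i_le_n].
have p_split : p = take i.-1 p ++ nth 0 p i.-1 :: drop i p.
  by rewrite -{1}(cat_take_drop i.-1 p) (drop_nth 0) ?prednK.
rewrite {1}p_split relaxed_binom_cat_cons -addrA !big_add1 /=; congr (_ + _).
rewrite (bigID (nth false y)) /= !big_distrr; congr (_ + _); apply: eq_bigr => k yk.
  by rewrite yk bterm1 mulrCA.
by rewrite (negbTE yk) bterm0 mulrCA.
Qed.
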